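(* Run the Unbiased Space Saving sketch with $m$ bins on an i.i.d. stream of items drawn from a discrete distribution with probabilities $p_1 \ge p_2 \ge \cdots$. If $p_1 < 1/m$, then with probability $1$, for all sufficiently large $t$, $0 \le t/m - \hat{N}_{min}(t) \le m(\log t)^2 + m$ and $0 \le \hat{N}_{max}(t) - t/m \le (\log t)^2 + 1$.
   Context: Unbiased Space Saving sketch with $m$ bins: maintain $m$ bins, each an (item, count) pair, counts initialized to $0$. For each new row with item $x_{new}$: if $x_{new}$ is the label of a bin, increment its count by $1$; otherwise choose a bin with the smallest count $\hat{N}_{min}$ (uniformly at random among all bins sharing the smallest count), increment its count by $1$, and with probability $1/(\hat{N}_{min}+1)$ replace its label by $x_{new}$. $\hat{N}_{min}(t)$ and $\hat{N}_{max}(t)$ are the smallest and largest bin counts after $t$ rows. *)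

From HB Require Import structures.
From mathcomp Require Import all_boot all_order all_algebra.
From mathcomp Require Import all_classical all_reals all_analysis.
Set Implicit Arguments. Unset Strict Implicit. Unset Printing Implicit Defensive.
Import Order.TTheory GRing.Theory Num.Theory.
Local Open Scope classical_set_scope.
Local Open Scope ring_scope.

(* The Unbiased Space Saving sketch as a deterministic function of its  *)
(* random inputs.                                                       *)
(* A state of the sketch with m bins: labels (None = no label yet) and  *)
(* counts.                                                              *)
Record uss_state (m : nat) := USS {
  uss_label : 'I_m -> option nat;
  uss_count : 'I_m -> nat }.

Definition uss_init (m : nat) : uss_state m := USS (fun _ => None) (fun _ => 0%N).

Definition uss_max m (s : uss_state m) : nat := \max_(i < m) uss_count s i.
Definition uss_min m (s : uss_state m) : nat :=
  \big[minn/uss_max s]_(i < m) uss_count s i.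

(* One update with item x.  u in [0,1] selects uniformly among the bins
   sharing the smallest count (the bin number floor(u*k) among the k tied
   bins, listed in increasing order); v in [0,1] is the coin: the label is
   replaced iff v < 1/(Nmin+1), an event of probability 1/(Nmin+1). *)
Definition uss_step {R : realType} m (s : uss_state m) (x : nat) (u v : R)
  : uss_state m :=
  match [pick i | uss_label s i == Some x] with
  | Some b =>
      USS (uss_label s)
          (fun i => if i == b then (uss_count s i).+1 else uss_count s i)
  | None =>
      let nmin := uss_min s in
      let tied := [seq i <- enum 'I_m | uss_count s i == nmin] in
      let k := size tied in
      let j := minn (Num.truncn (u * k%:R)) k.-1 in
      match nth None (map Some tied) j with
      | None => s
      | Some b =>
          USS (fun i => if (i == b) && (v < (nmin.+1%:R)^-1) then Some x
                        else uss_label s i)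
              (fun i => if i == b then (uss_count s i).+1 else uss_count s i)
      end
  end.

(* state after t rows, the n-th row (n = 0,1,...) being item X n with
   auxiliary randomness U n, V n *)
Fixpoint uss_run {R : realType} m (X : nat -> nat) (U V : nat -> R) (t : nat)
  : uss_state m :=
  match t with
  | 0 => uss_init m
  | n.+1 => uss_step (@uss_run R m X U V n) (X n) (U n) (V n)
  end.

Definition mutually_independent {R : realType} {d} {T : measurableType d}
  (P : probability T R) (I : eqType) (Y : I -> T -> R) : Prop :=
  forall (s : seq I) (B : I -> set R), uniq s ->
    (forall k, measurable (B k)) ->
    P (\bigcap_(k in [set k | k \in s]) (Y k @^-1` B k)) =
    (\prod_(k <- s) fine (P (Y k @^-1` B k)))%:E.

(* the combined family (item n, tie-breaker n, coin n), items embedded in R *)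
Definition uss_family {R : realType} {T : Type}
  (X : nat -> T -> nat) (U V : nat -> T -> R) (k : nat * 'I_3) : T -> R :=
  fun w => if val k.2 == 0%N then (X k.1 w)%:R
           else if val k.2 == 1%N then U k.1 w else V k.1 w.
Arguments uss_run {R} m X U V t.

From HB Require Import structures.
From mathcomp Require Import all_boot all_order all_algebra.
From mathcomp Require Import all_classical all_reals all_analysis.
From mathcomp Require Import lra ring.
Import Order.TTheory GRing.Theory Num.Theory.
Import numFieldNormedType.Exports.
Local Open Scope classical_set_scope.
Local Open Scope ring_scope.
Set Implicit Arguments. Unset Strict Implicit. Unset Printing Implicit Defensive.

(* A bin that is not at the minimum keeps its label and is incremented exactly
   when its label arrives.  So if [s] is the last time bin [b] had the minimal
   count, its count at time [t] is at most [Nmin(s) + 1] plus the number of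
   arrivals in [(s, t)] of its label, which is an item [X_n'] with [n' <= s];
   as [m Nmin(s) <= s], bin [b] exceeds [t/m + L + 1] only if some window
   [(s, t)] holds more than [(t-s-1)/m + L] copies of some [X_n'].  This bounds
   [Nmax], and [Nmin] follows because the counts sum to [t].
   Given [X_n' = i], the window count is binomial with parameter
   [p_i <= p_1 < 1/m]; an exponential moment bound with a base [z > 1] such
   that [(1 - p_1 + p_1 z)^m <= z] gives such an excess probability at most
   [z^(-L)].  With [L = (log t)^2] the union over the [t^2] pairs [(n', s)] is
   summable in [t], and Borel--Cantelli concludes. *)

Section SketchStep.
Variable m : nat.
Hypothesis m_gt0 : (0 < m)%N.
Implicit Types s : uss_state m.

Lemma uss_min_le s i : (uss_min s <= uss_count s i)%N.
Proof. by have := bigmin_le (uss_max s) i (uss_count s). Qed.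

Lemma uss_max_ge s i : (uss_count s i <= uss_max s)%N.
Proof. exact: leq_bigmax. Qed.

Lemma uss_max_attained s : exists i, uss_max s = uss_count s i.
Proof.
have card_gt0 : (0 < #|'I_m|)%N by rewrite card_ord.
by rewrite /uss_max; have [i ->] := bigop.eq_bigmax (uss_count s) card_gt0; exists i.
Qed.

Lemma uss_min_attained s : exists i, uss_min s = uss_count s i.
Proof.
have [i0 _] := uss_max_attained s.
have max_ge i : predT i -> (uss_count s i <= uss_max s)%O by move=> _; apply: uss_max_ge.
by have [i _ min_i] := eq_bigmin i0 _ _ isT max_ge; exists i.
Qed.

Lemma uss_step_spec (R : realType) s x (u v : R) : exists b,
  [/\ forall i, uss_count (uss_step s x u v) i = (uss_count s i + (i == b))%N,
      forall i, i != b -> uss_label (uss_step s x u v) i = uss_label s i &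
      uss_label s b = Some x /\ uss_label (uss_step s x u v) b = Some x \/
      [/\ uss_count s b = uss_min s, forall i, uss_label s i != Some x &
          uss_label (uss_step s x u v) b \in [:: uss_label s b; Some x]]].
Proof.
rewrite /uss_step; case: pickP => [b /eqP lab_b|no_x].
  exists b; split=> [i|//|]; last by left.
  by rewrite /=; case: eqP; rewrite ?addn0 ?addn1.
set tied := [seq i <- enum 'I_m | uss_count s i == uss_min s].
have [i0 min_i0] := uss_min_attained s.
have tied_gt0 : (0 < size tied)%N.
  by rewrite -has_predT; apply/hasP; exists i0; rewrite // mem_filter mem_enum min_i0 eqxx.
set j := minn _ (size tied).-1.
have j_lt : (j < size tied)%N by rewrite (leq_ltn_trans (geq_minr _ _)) ?prednK.
rewrite (nth_map i0) //.
have : nth i0 tied j \in tied by rewrite mem_nth.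
set b := nth i0 tied j; rewrite mem_filter => /andP[/eqP min_b _].
exists b; split=> [i /=|i /negbTE /= ->//|]; first by case: eqP; rewrite ?addn0 ?addn1.
right; split=> // [i|]; first by apply/eqP => lab_i; have := no_x i; rewrite lab_i eqxx.
by rewrite /= eqxx /=; case: ifP; rewrite !inE eqxx ?orbT.
Qed.

End SketchStep.

Definition hits (x : nat -> nat) (s t y : nat) : nat := (\sum_(s.+1 <= n < t) (x n == y))%N.

Lemma hits_ord (x : nat -> nat) s t y :
  hits x s t y = (\sum_(j < t - s.+1) (x (s.+1 + j) == y))%N.
Proof.
rewrite /hits -{1}(add0n s.+1) big_addn big_mkord.
by apply: eq_bigr => j _; rewrite addnC.
Qed.

Section SketchRun.
Variables (R : realType) (m : nat) (x : nat -> nat) (u v : nat -> R).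
Hypothesis m_gt0 : (0 < m)%N.
Local Notation st t := (uss_run m x u v t).
Local Notation cnt t i := (uss_count (st t) i).
Local Notation lab t i := (uss_label (st t) i).

Lemma uss_run_count_sum t : (\sum_i cnt t i)%N = t.
Proof.
elim: t => [|t IH] /=; first by rewrite big1.
have [b [cnt_b _ _]] := uss_step_spec m_gt0 (st t) (x t) (u t) (v t).
under eq_bigr do rewrite cnt_b.
by rewrite big_split /= IH (bigD1 b) //= eqxx big1 ?addn0 ?addn1 // => i /negbTE ->.
Qed.

Lemma uss_run_label_inj t i j y : lab t i = Some y -> lab t j = Some y -> i = j.
Proof.
elim: t i j y => [//|t IH] i j y /=.
have [b [_ keep lab_b]] := uss_step_spec m_gt0 (st t) (x t) (u t) (v t).
set s' := uss_step _ _ _ _ in keep lab_b *.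
have [unchanged|[new no_x]] : (forall k, uss_label s' k = lab t k) \/
    uss_label s' b = Some (x t) /\ (forall k, lab t k != Some (x t)).
  have unchanged : uss_label s' b = lab t b -> forall k, uss_label s' k = lab t k.
    by move=> lab_b' k; case: (eqVneq k b) => [->|/keep].
  case: lab_b => [[lab_b lab_b']|[_ no_x]].
    by left; apply: unchanged; rewrite lab_b lab_b'.
  by rewrite !inE => /orP[/eqP/unchanged|/eqP new]; [left|right].
- by rewrite !unchanged; apply: IH.
- case: (eqVneq i b) => [->|ib]; case: (eqVneq j b) => [->|jb] //; rewrite ?new ?keep //.
  + by move=> [<-] lab_j; have := no_x j; rewrite lab_j eqxx.
  + by move=> lab_i [yE]; have := no_x i; rewrite lab_i yE eqxx.
  + exact: IH.
Qed.

Lemma uss_run_label_past t i y : lab t i = Some y -> exists2 n, (n < t)%N & y = x n.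
Proof.
elim: t i y => [//|t IH] i y /=.
have [b [_ keep lab_b]] := uss_step_spec m_gt0 (st t) (x t) (u t) (v t).
set s' := uss_step _ _ _ _ in keep lab_b *.
have [->|->] : uss_label s' i = lab t i \/ uss_label s' i = Some (x t).
  case: (eqVneq i b) => [->|/keep]; last by left.
  case: lab_b => [[lab_b ->]|[_ _]]; first by left.
  by rewrite !inE => /orP[]/eqP; [left|right].
- by move=> /IH[n lt_nt ->]; exists n; rewrite // ltnS ltnW.
- by move=> [<-]; exists t.
Qed.

Lemma uss_run_count_succ_le t b : (cnt t.+1 b <= (cnt t b).+1)%N.
Proof.
have [b' [cnt_b' _ _]] := uss_step_spec m_gt0 (st t) (x t) (u t) (v t).
by rewrite /= cnt_b' -addn1 leq_add2l leq_b1.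
Qed.

Lemma uss_run_count_notmin t b : cnt t b != uss_min (st t) ->
  cnt t.+1 b = (cnt t b + (lab t b == Some (x t)))%N /\ lab t.+1 b = lab t b.
Proof.
move=> not_min.
have [b' [cnt_b' keep [[lab_b' lab_b'']|[min_b' no_x _]]]] :=
  uss_step_spec m_gt0 (st t) (x t) (u t) (v t).
  have -> : (lab t b == Some (x t)) = (b == b').
    by apply/eqP/eqP => [lab_b|->//]; apply: uss_run_label_inj lab_b lab_b'.
  by rewrite /= cnt_b'; case: (eqVneq b b') => [->|/keep]; rewrite ?lab_b'.
have bb' : b != b' by apply: contraNneq not_min => ->; rewrite min_b'.
by rewrite /= cnt_b' keep // (negbTE bb') (negbTE (no_x b)).
Qed.

Lemma uss_run_count_since_min t b : cnt t b = uss_min (st t) \/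
  exists s, [/\ (s < t)%N, lab t b = lab s.+1 b &
    (cnt t b <= uss_min (st s) + 1 + \sum_(s.+1 <= n < t) (lab t b == Some (x n)))%N].
Proof.
elim: t => [|t IH].
  by left; have [i ->] := uss_min_attained m_gt0 (st 0).
have [min_b|not_min] := eqVneq (cnt t b) (uss_min (st t)).
  right; exists t; split=> //.
  by rewrite big_geq // addn0 -min_b addn1 uss_run_count_succ_le.
case: IH => [min_b|[s [lt_st lab_s cnt_le]]]; first by rewrite min_b eqxx in not_min.
have [cnt_t lab_t] := uss_run_count_notmin not_min.
right; exists s; split; [by rewrite ltnS ltnW|by rewrite lab_t|].
by rewrite cnt_t lab_t big_nat_recr //= addnA leq_add2r.
Qed.

Lemma uss_run_count_le_hits t b : cnt t b = uss_min (st t) \/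
  exists s n', [/\ (s < t)%N, (n' <= s)%N &
    (cnt t b <= uss_min (st s) + 1 + hits x s t (x n'))%N].
Proof.
case: (uss_run_count_since_min t b) => [|[s [lt_st lab_s cnt_le]]]; [by left|right].
case: (lab t b) lab_s cnt_le => [y|] lab_s cnt_le.
  have [n' lt_n's yE] := uss_run_label_past (esym lab_s).
  exists s, n'; split=> //; rewrite -yE.
  suff <- : (\sum_(s.+1 <= n < t) (Some y == Some (x n)))%N = hits x s t y by [].
  by apply: eq_bigr => n _; rewrite eq_sym.
exists s, 0%N; split=> //; rewrite big1 // addn0 in cnt_le.
exact: leq_trans cnt_le (leq_addr _ _).
Qed.

Lemma uss_run_min_mul_le t : (m * uss_min (st t) <= t)%N.
Proof.
rewrite -{2}(uss_run_count_sum t) -[m in (m * _)%N](card_ord m) -sum_nat_const.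
by apply: leq_sum => i _; apply: uss_min_le.
Qed.

Lemma uss_run_max_mul_ge t : (t <= m * uss_max (st t))%N.
Proof.
rewrite -{1}(uss_run_count_sum t) -[m in (m * _)%N](card_ord m) -sum_nat_const.
by apply: leq_sum => i _; apply: uss_max_ge.
Qed.

Lemma uss_run_le_min_max t : (t <= uss_min (st t) + m.-1 * uss_max (st t))%N.
Proof.
have [b min_b] := uss_min_attained m_gt0 (st t).
rewrite -{1}(uss_run_count_sum t) (bigD1 b) //= min_b leq_add2l.
rewrite -[m in m.-1](card_ord m) -(cardC1 b) -sum_nat_const.
by apply: leq_sum => i _; apply: uss_max_ge.
Qed.

Lemma uss_run_min_le t : ((uss_min (st t))%:R <= t%:R / m%:R :> R).
Proof. by rewrite ler_pdivlMr ?ltr0n // -natrM mulnC ler_nat uss_run_min_mul_le. Qed.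

Lemma uss_run_count_bound t (L : R) : 0 <= L ->
  (forall s n', (s < t)%N -> (n' <= s)%N ->
     (hits x s t (x n'))%:R <= (t - s.+1)%:R / m%:R + L) ->
  forall b, (cnt t b)%:R <= t%:R / m%:R + L + 1.
Proof.
move=> L_ge0 hits_le b.
case: (uss_run_count_le_hits t b) => [->|[s [n' [lt_st le_n's]]]].
  by have := uss_run_min_le t; lra.
rewrite -(ler_nat R) !natrD => cnt_le.
have := hits_le s n' lt_st le_n's; have := uss_run_min_le s.
have : s%:R / m%:R + (t - s.+1)%:R / m%:R <= t%:R / m%:R :> R.
  rewrite -mulrDl ler_wpM2r ?invr_ge0 // -natrD ler_nat.
  by apply: ltnW; rewrite -addSn subnKC.
lra.
Qed.

Lemma uss_run_min_max_bounds t (L : R) : 0 <= L ->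
  (forall s n', (s < t)%N -> (n' <= s)%N ->
     (hits x s t (x n'))%:R <= (t - s.+1)%:R / m%:R + L) ->
  0 <= (t%:R : R) / m%:R - (uss_min (st t))%:R <= m%:R * L + m%:R /\
  0 <= ((uss_max (st t))%:R : R) - t%:R / m%:R <= L + 1.
Proof.
move=> L_ge0 hits_le; have m_pos : (0 : R) < m%:R by rewrite ltr0n.
set a := t%:R / m%:R.
have max_le : (uss_max (st t))%:R <= a + L + 1.
  by have [b ->] := uss_max_attained m_gt0 (st t); apply: uss_run_count_bound.
have min_le : (uss_min (st t))%:R <= a := uss_run_min_le t.
have max_ge : a <= (uss_max (st t))%:R.
  by rewrite ler_pdivrMr // -natrM mulnC ler_nat uss_run_max_mul_ge.
have sum_le : a * m%:R <= (uss_min (st t))%:R + (m%:R - 1) * (uss_max (st t))%:R.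
  rewrite divfK ?gt_eqF // -[1]/(1%:R) -natrB // -natrM -natrD ler_nat subn1.
  exact: uss_run_le_min_max.
have : (m%:R - 1) * (uss_max (st t))%:R <= (m%:R - 1) * (a + L + 1).
  by rewrite ler_wpM2l // subr_ge0 ler1n.
have : 0 <= m%:R * L by rewrite mulr_ge0 ?ler0n.
split; apply/andP; split; nra.
Qed.

End SketchRun.

Section Chernoff.
Variable R : realType.

Lemma chernoff_base_exists (m : nat) (p : R) : (0 < m)%N -> 0 <= p -> p < m%:R^-1 ->
  exists2 z : R, 1 < z & (1 - p + p * z) ^+ m <= z.
Proof.
move=> m_gt0 p_ge0 p_lt; have m_pos : (0 : R) < m%:R by rewrite ltr0n.
set q := m%:R * p.
have q_ge0 : 0 <= q by rewrite mulr_ge0 ?ler0n.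
have q_lt1 : q < 1 by rewrite /q mulrC -ltr_pdivlMr // div1r.
exists (2 - q); first lra.
have -> : 1 - p + p * (2 - q) = 1 + p * (1 - q) by ring.
have pow_le : (1 + p * (1 - q)) ^+ m <= expR (q * (1 - q)).
  have -> : q * (1 - q) = m%:R * (p * (1 - q)) by rewrite /q mulrA.
  rewrite expRM_natl lerXn2r ?nnegrE ?expR_ge1Dx ?(ltW (expR_gt0 _)) //.
  by rewrite addr_ge0 // mulr_ge0 //; lra.
apply: le_trans pow_le _.
set a := q * (1 - q).
(* [expR a <= 2 - q] because [(2 - q) (1 - a) - 1 = (1 - q)^3 >= 0]. *)
have exp_inv : expR a * expR (- a) = 1 by rewrite -expRD subrr expR0.
have exp_neg : 1 - a <= expR (- a) by have := expR_ge1Dx (- a); lra.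
have : 1 <= (2 - q) * (1 - a).
  have : 0 <= (1 - q) ^+ 3 by rewrite exprn_ge0 //; lra.
  rewrite /a; nra.
have : (2 - q) * (1 - a) <= (2 - q) * expR (- a) by rewrite ler_wpM2l //; lra.
have := expR_gt0 a; nra.
Qed.

Lemma chernoff_window_le (m n : nat) (p z L : R) : (0 < m)%N -> 1 < z ->
  1 <= 1 - p + p * z -> (1 - p + p * z) ^+ m <= z ->
  expR (- ((n%:R / m%:R + L) * ln z)) * (1 - p + p * z) ^+ n <= expR (- (L * ln z)).
Proof.
move=> m_gt0 z_gt1 Q_ge1 Qm_le; have m_pos : (0 : R) < m%:R by rewrite ltr0n.
set Q := 1 - p + p * z in Q_ge1 Qm_le *.
rewrite -[Q]lnK ?posrE; last lra.
rewrite -expRM_natl -expRD ler_expR.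
have : m%:R * ln Q <= ln z.
  by rewrite mulr_natl -lnXn ?ler_ln ?posrE ?exprn_gt0 //; lra.
have : n%:R * ln Q = n%:R / m%:R * (m%:R * ln Q) by rewrite mulrA divfK ?gt_eqF.
have : 0 <= n%:R / m%:R :> R by rewrite divr_ge0 ?ler0n.
nra.
Qed.

(* Exponential Markov bound, pattern by pattern: a pattern with more than [th]
   successes weighs at most [z^(-th)] times its [z]-tilted weight, and the
   tilted weights sum to [(1 - p + p z)^n <= (1 - p0 + p0 z)^n]. *)
Lemma binomial_tail_le n (p p0 z th : R) : 0 <= p -> p <= p0 -> p0 <= 1 -> 1 <= z ->
  \sum_(f : {ffun 'I_n -> bool} | th < (\sum_j (f j : nat))%:R)
     \prod_(j < n) (if f j then p else 1 - p)
   <= expR (- (th * ln z)) * (1 - p0 + p0 * z) ^+ n.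
Proof.
move=> p_ge0 p_le p0_le1 z_ge1.
have z_pos : 0 < z by lra.
have tilt (f : {ffun 'I_n -> bool}) : th < (\sum_j (f j : nat))%:R ->
    \prod_(j < n) (if f j then p else 1 - p) <=
    expR (- (th * ln z)) * \prod_(j < n) (if f j then p * z else 1 - p).
  move=> th_lt.
  have -> : \prod_(j < n) (if f j then p * z else 1 - p) =
      z ^+ (\sum_j (f j : nat)) * \prod_(j < n) (if f j then p else 1 - p).
    rewrite (big_morph (fun k => z ^+ k) (exprD z) (expr0 z)) -big_split /=.
    by apply: eq_bigr => j _; case: (f j); rewrite ?mul1r // mulrC.
  rewrite mulrA -[X in X <= _]mul1r ler_wpM2r //.
    by rewrite prodr_ge0 // => j _; case: (f j); lra.
  rewrite -[z]lnK ?posrE // -expRM_natl -expRD -[leLHS]expR0 ler_expR lnK ?posrE //.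
  have := ln_ge0 z_ge1; nra.
apply: le_trans (ler_sum _ tilt) _; rewrite -mulr_sumr.
apply: ler_wpM2l; first exact: ltW (expR_gt0 _).
apply: (@le_trans _ _ (\sum_(f : {ffun 'I_n -> bool})
    \prod_(j < n) (if f j then p * z else 1 - p))).
  rewrite [leLHS]big_mkcond /=; apply: ler_sum => f _.
  by case: ifP => // _; rewrite prodr_ge0 // => j _; case: (f j); nra.
rewrite -(bigA_distr_bigA (fun (j : 'I_n) (b : bool) => if b then p * z else 1 - p)) /=.
under eq_bigr do rewrite big_bool /=.
by rewrite prodr_const card_ord lerXn2r ?nnegrE; nra.
Qed.

End Chernoff.

Lemma big_option (R : Type) (idx : R) (op : Monoid.com_law idx) (I : finType)
    (F : option I -> R) :
  \big[op/idx]_(k : option I) F k = op (F None) (\big[op/idx]_i F (Some i)).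
Proof.
rewrite (perm_big (None :: map Some (index_enum I))) ?big_cons ?big_map //.
apply: uniq_perm; rewrite ?index_enum_uniq //=.
  by rewrite map_inj_uniq ?index_enum_uniq // andbT; apply/mapP => -[].
by case=> [i|]; rewrite mem_index_enum inE ?(mem_map Some_inj) ?mem_index_enum.
Qed.

Lemma le_measure_bigsetU d (T : measurableType d) (R : realType)
    (mu : {measure set T -> \bar R}) (I : Type) (r : seq I) (P : pred I)
    (F : I -> set T) : (forall i, measurable (F i)) ->
  (mu (\big[setU/set0]_(i <- r | P i) F i) <= \sum_(i <- r | P i) mu (F i))%E.
Proof.
move=> mF; elim: r => [|a r IH]; first by rewrite !big_nil measure0.
rewrite !big_cons; case: ifP => // _.
apply: le_trans (measureU2 mu (mF a) (bigsetU_measurable _ (fun i _ => mF i))) _.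
exact: leeD2l.
Qed.

Lemma measure_bigcup_ord_le d (T : measurableType d) (R : realType)
    (mu : {measure set T -> \bar R}) (F : nat -> set T) n (c : R) :
  (forall i, (i < n)%N -> measurable (F i)) ->
  (forall i, (i < n)%N -> (mu (F i) <= c%:E)%E) ->
  (mu (\bigcup_(i < n) F i) <= (n%:R * c)%:E)%E.
Proof.
move=> mF muF_le; rewrite bigcup_mkord; apply: le_trans (Boole_inequality _ mF) _.
apply: (@le_trans _ _ (\sum_(i < n) c%:E)%E); first by apply: lee_sum => i _; apply: muF_le.
by rewrite sumEFin sumr_const card_ord mulr_natl.
Qed.

Section ItemEvents.
Context (R : realType) d (T : measurableType d) (P : probability T R) (p : nat -> R)
  (X : nat -> T -> nat) (U V : nat -> T -> R).
Hypotheses (mX : forall n i, measurable [set w | X n w = i])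
  (PX : forall n i, P [set w | X n w = i] = (p i)%:E)
  (indep : mutually_independent P (uss_family X U V)).

Lemma item_eventE n i (c : bool) : [set w | (X n w == i) = c] =
  if c then [set w | X n w = i] else ~` [set w | X n w = i].
Proof. by apply/seteqP; split=> w /=; case: c; case: eqP. Qed.

Lemma measurable_item_event n i c : measurable [set w | (X n w == i) = c].
Proof. by rewrite item_eventE; case: c; [|apply: measurableC]; apply: mX. Qed.

Lemma prob_item_event n i (c : bool) :
  P [set w | (X n w == i) = c] = (if c then p i else 1 - p i)%:E.
Proof. by rewrite item_eventE; case: c; rewrite ?probability_setC ?PX. Qed.

Definition item_pattern (I : finType) (tau : I -> nat) (b : I -> bool) (i : nat)
  : set T := [set w | forall k, (X (tau k) w == i) = b k].

Lemma measurable_item_pattern (I : finType) (tau : I -> nat) b i :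
  measurable (item_pattern tau b i).
Proof.
have -> : item_pattern tau b i =
    \big[setI/setT]_(k <- index_enum I) [set w | (X (tau k) w == i) = b k].
  rewrite -bigcap_seq; apply/seteqP; split=> [w pat_w k _|w pat_w k].
    exact: pat_w.
  by apply: pat_w; rewrite /= mem_index_enum.
by apply: bigsetI_measurable => k _; apply: measurable_item_event.
Qed.

Lemma prob_item_pattern (I : finType) (tau : I -> nat) (b : I -> bool) i :
  injective tau ->
  P (item_pattern tau b i) = (\prod_k (if b k then p i else 1 - p i))%:E.
Proof.
move=> tau_inj.
(* Coordinate [ord0] of [uss_family] is the item; [B] reads the prescribed
   value of [b] back through the injective [tau]. *)
pose S := [seq (tau k, ord0 : 'I_3) | k <- index_enum I].
pose B (nc : nat * 'I_3) : set R := if [pick k | tau k == nc.1] is Some k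
  then (if b k then [set i%:R] else ~` [set i%:R]) else setT.
have S_uniq : uniq S by rewrite map_inj_uniq ?index_enum_uniq // => k k' [/tau_inj].
have mB nc : measurable (B nc).
  rewrite /B; case: pickP => [k _|_]; last exact: measurableT.
  by case: (b k); [|apply: measurableC]; apply: measurable_set1.
have preB k : uss_family X U V (tau k, ord0) @^-1` B (tau k, ord0) =
    [set w | (X (tau k) w == i) = b k].
  rewrite /B; case: pickP => [k' /eqP/tau_inj->|/(_ k)]; last by rewrite eqxx.
  have natrE a : ((a%:R : R) = i%:R) = (a = i).
    by rewrite propeqE; split=> [/eqP|->//]; rewrite eqr_nat => /eqP.
  by rewrite item_eventE /uss_family; case: (b k); apply/seteqP; split=> w /=; rewrite natrE.
have := indep S_uniq mB.
have -> : \bigcap_(nc in [set nc | nc \in S]) (uss_family X U V nc @^-1` B nc) =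
    item_pattern tau b i.
  apply/seteqP; split=> w /= pat_w.
    by move=> k; rewrite -[_ = _]/([set w | _] w) -preB; apply: pat_w; apply: map_f.
  by move=> _ /mapP[k _ ->]; rewrite preB; apply: pat_w.
move=> ->; congr EFin; rewrite big_map; apply: eq_bigr => k _.
by rewrite preB prob_item_event.
Qed.

Definition window_pattern (n' s i : nat) n (f : {ffun 'I_n -> bool}) : set T :=
  [set w | X n' w = i /\ forall j : 'I_n, (X (s.+1 + j)%N w == i) = f j].

Lemma window_pattern_item n' s i n (f : {ffun 'I_n -> bool}) :
  window_pattern n' s i f =
  item_pattern (fun k : option 'I_n => if k is Some j then (s.+1 + j)%N else n')
               (fun k => if k is Some j then f j else true) i.
Proof.
apply/seteqP; split=> w /=; first by move=> [/eqP Xn' Xwin] [j|].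
by move=> pat_w; split=> [|j]; [apply/eqP; apply: pat_w None|apply: pat_w (Some j)].
Qed.

Lemma prob_window_pattern n' s i n (f : {ffun 'I_n -> bool}) : (n' <= s)%N ->
  P (window_pattern n' s i f) = (p i * \prod_j (if f j then p i else 1 - p i))%:E.
Proof.
move=> le_n's; rewrite window_pattern_item prob_item_pattern ?big_option //.
have win_gt j : (n' < s.+1 + j)%N by rewrite ltnS (leq_trans le_n's) ?leq_addr.
case=> [j|] [j'|] //= E.
- by congr Some; apply/val_inj/(addnI E).
- by have := win_gt j; rewrite E ltnn.
- by have := win_gt j'; rewrite -E ltnn.
Qed.

Lemma window_excess_bigsetU (th : R) n' s t i :
  [set w | X n' w = i /\ th < (hits (fun n => X n w) s t i)%:R] =
  \big[setU/set0]_(f : {ffun 'I_(t - s.+1) -> bool} | th < (\sum_j (f j : nat))%:R)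
     window_pattern n' s i f.
Proof.
rewrite -bigcup_seq_cond; apply/seteqP; split=> w /=.
  move=> [Xn' th_lt]; exists [ffun j : 'I_(t - s.+1) => X (s.+1 + j)%N w == i].
    rewrite /= mem_index_enum /=; under eq_bigr do rewrite ffunE.
    by rewrite hits_ord in th_lt.
  by split=> // j; rewrite ffunE.
move=> [f /andP[_ th_lt] [Xn' pat_w]]; split=> //.
by rewrite hits_ord /=; under eq_bigr do rewrite pat_w.
Qed.

Lemma measurable_window_excess (th : R) n' s t i :
  measurable [set w | X n' w = i /\ th < (hits (fun n => X n w) s t i)%:R].
Proof.
rewrite window_excess_bigsetU; apply: bigsetU_measurable => f _.
by rewrite window_pattern_item; apply: measurable_item_pattern.
Qed.

Definition excess_event (th : R) (n' s t : nat) : set T :=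
  [set w | th < (hits (fun n => X n w) s t (X n' w))%:R].

Lemma excess_event_bigcup th n' s t : excess_event th n' s t =
  \bigcup_i [set w | X n' w = i /\ th < (hits (fun n => X n w) s t i)%:R].
Proof. by apply/seteqP; split=> [w th_lt|w [i _ [<-]]] //; exists (X n' w). Qed.

Lemma measurable_excess_event th n' s t : measurable (excess_event th n' s t).
Proof.
by rewrite excess_event_bigcup; apply: bigcupT_measurable => i; apply: measurable_window_excess.
Qed.

Definition bad_event (m : nat) (L : R) (t : nat) : set T :=
  \bigcup_(s < t) \bigcup_(n' < s.+1) excess_event ((t - s.+1)%:R / m%:R + L) n' s t.

Lemma measurable_bad_event m L t : measurable (bad_event m L t).
Proof.
apply: bigcup_measurable => s _; apply: bigcup_measurable => n' _.
exact: measurable_excess_event.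
Qed.

Variable q : R.
Hypotheses (p_ge0 : forall i, 0 <= p i) (p_le_q : forall i, p i <= q) (q_le1 : q <= 1)
  (sum_p_le1 : (\sum_(i <oo) (p i)%:E <= 1)%E).

Lemma prob_window_excess_le (z th : R) n' s t i : 1 <= z -> (n' <= s)%N ->
  (P [set w | X n' w = i /\ (th < (hits (fun n => X n w) s t i)%:R)%R] <=
   (p i * (expR (- (th * ln z)) * (1 - q + q * z) ^+ (t - s.+1)))%:E)%E.
Proof.
move=> z_ge1 le_n's; rewrite window_excess_bigsetU.
apply: le_trans (le_measure_bigsetU _ _ _ _) _.
  by move=> f; rewrite window_pattern_item; apply: measurable_item_pattern.
rewrite (eq_bigr (fun f : {ffun 'I_(t - s.+1) -> bool} =>
  (p i * \prod_j (if f j then p i else 1 - p i))%:E)); last first.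
  by move=> f _; apply: prob_window_pattern.
rewrite sumEFin lee_fin -mulr_sumr; apply: ler_wpM2l => //.
exact: binomial_tail_le.
Qed.

Lemma prob_excess_event_le (z th : R) n' s t : 1 <= z -> (n' <= s)%N ->
  (P (excess_event th n' s t) <=
   (expR (- (th * ln z)) * (1 - q + q * z) ^+ (t - s.+1))%:E)%E.
Proof.
move=> z_ge1 le_n's; set K := expR _ * _.
have K_ge0 : 0 <= K.
  apply: mulr_ge0; first exact: ltW (expR_gt0 _).
  by apply: exprn_ge0; have := le_trans (p_ge0 0) (p_le_q 0); nra.
rewrite excess_event_bigcup.
have mA := measurable_window_excess th n' s t.
apply: le_trans (measure_sigma_subadditive _ mA (bigcupT_measurable _ mA) (@subset_refl _ _)) _.
apply: (@le_trans _ _ (\sum_(i <oo) (K%:E * (p i)%:E))%E).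
  apply: lee_nneseries => [i _ _|i _]; first exact: measure_ge0.
  by rewrite -EFinM mulrC prob_window_excess_le.
rewrite nneseriesZl => [|i _]; last by rewrite lee_fin.
rewrite -[leRHS]mule1 lee_pmul // nneseries_ge0 // => i _ _.
by rewrite lee_fin.
Qed.

Lemma prob_bad_event_le (m : nat) (z L : R) t : (0 < m)%N -> 1 < z ->
  (1 - q + q * z) ^+ m <= z ->
  (P (bad_event m L t) <= (t%:R * (t%:R * expR (- (L * ln z))))%:E)%E.
Proof.
move=> m_gt0 z_gt1 Qm_le.
have Q_ge1 : 1 <= 1 - q + q * z by have := le_trans (p_ge0 0) (p_le_q 0); nra.
apply: measure_bigcup_ord_le => [s _|s lt_st].
  by apply: bigcup_measurable => n' _; apply: measurable_excess_event.
apply: (@le_trans _ _ (s.+1%:R * expR (- (L * ln z)))%:E); last first.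
  by rewrite lee_fin; apply: ler_wpM2r; [exact: ltW (expR_gt0 _)|rewrite ler_nat].
apply: measure_bigcup_ord_le => [n' _|n' lt_n's]; first exact: measurable_excess_event.
apply: (le_trans (prob_excess_event_le _ t (ltW z_gt1) (ltnSE lt_n's))).
by rewrite lee_fin chernoff_window_le.
Qed.

End ItemEvents.

Lemma eseries_EFin_lim (R : realType) (u : nat -> R) (l : R) :
  series u @ \oo --> l -> (\sum_(i <oo) (u i)%:E = l%:E)%E.
Proof.
move=> cu; apply: cvg_lim => //.
apply: cvg_EFin; first by apply: nearW => n; rewrite sumEFin.
by rewrite (_ : _ \o _ = series u) // funeqE => n /=; rewrite sumEFin.
Qed.

Lemma ae_eventually_notin d (T : measurableType d) (R : realType)
    (mu : {measure set T -> \bar R}) (F : nat -> set T) (N : nat) :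
  (forall t, measurable (F t)) ->
  (forall t, (N <= t)%N -> (mu (F t) <= (t.+1%:R^-1 - t.+2%:R^-1)%:E)%E) ->
  {ae mu, forall w, exists t0, forall t, (t0 <= t)%N -> ~ F t w}.
Proof.
move=> mF muF_le.
pose G t := if (N <= t)%N then F t else set0.
have mG t : measurable (G t) by rewrite /G; case: ifP.
have muG_le t : (mu (G t) <= (t.+1%:R^-1 - t.+2%:R^-1)%:E)%E.
  rewrite /G; case: ifP => [/muF_le//|_].
  by rewrite measure0 lee_fin subr_ge0 lef_pV2 ?posrE ?ler_nat ?ltr0n.
have sumG : (\sum_(t <oo) mu (G t) < +oo)%E.
  apply: (@le_lt_trans _ _ 1%E); last exact: ltry.
  apply: lime_le; first by apply: is_cvg_nneseries => t _ _; apply: measure_ge0.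
  apply: nearW => n; apply: le_trans (lee_sum _ (fun t _ => muG_le t)) _.
  rewrite sumEFin lee_fin (telescope_sumr_eq (fun k => - k.+1%:R^-1)) //.
    have : 0 <= n.+1%:R^-1 :> R by rewrite invr_ge0.
    by rewrite invr1; set x := _^-1; lra.
  by move=> k _; rewrite opprK addrC.
exists (lim_sup_set G); split.
- by apply: bigcapT_measurable => n; apply: bigcup_measurable => k _.
- exact: lim_sup_set_cvg0.
move=> w /= not_eventually n _.
apply: contra_notP not_eventually => not_G; exists (maxn n N) => t.
rewrite geq_max => /andP[le_nt le_Nt] Ftw; apply: not_G; exists t => //.
by rewrite /G le_Nt.
Qed.

Lemma sqr_expR_lnsqr_le (R : realType) (c : R) (t : nat) : 0 < c -> (3 <= t)%N ->
  5 / c <= ln t%:R ->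
  t%:R * (t%:R * expR (- ((ln (t%:R : R)) ^+ 2 * c))) <= t.+1%:R^-1 - t.+2%:R^-1.
Proof.
move=> c_gt0 t_ge3 ln_ge.
set a : R := t%:R.
have a_ge3 : 3 <= a by rewrite /a (ler_nat R 3).
have a_pos : 0 < a by lra.
set l := ln a.
have l_pos : 0 < l by apply: ln_gt0; lra.
have lc_ge5 : 5 <= l * c by rewrite -ler_pdivrMr.
have : expR (- (l ^+ 2 * c)) <= (a ^+ 5)^-1.
  rewrite -[a in (a ^+ 5)^-1]lnK ?posrE // -expRM_natl -expRN ler_expR lerN2.
  rewrite -/l; nra.
move/(ler_wpM2l (ltW a_pos))/(ler_wpM2l (ltW a_pos)) => /le_trans; apply.
have -> : a * (a * (a ^+ 5)^-1) = (a ^+ 3)^-1 by field; rewrite gt_eqF.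
have -> : t.+1%:R^-1 - t.+2%:R^-1 = ((a + 1) * (a + 2))^-1 :> R.
  rewrite -[t.+2]addn2 -[t.+1]addn1 !natrD -/a; field.
  by apply/andP; split; rewrite gt_eqF //; lra.
rewrite lef_pV2 ?posrE ?exprn_gt0 ?mulr_gt0 //; try lra.
nra.
Qed.

Theorem lemma3 (R : realType) (d : measure_display) (T : measurableType d)
  (P : probability T R) (m : nat) (p : nat -> R)
  (X : nat -> T -> nat) (U V : nat -> T -> R) :
  (0 < m)%N ->
  (* discrete distribution p_1 >= p_2 >= ... on the items 0,1,2,... *)
  (forall i, 0 <= p i) ->
  (series p @ \oo --> (1 : R)) ->
  (forall i, p i.+1 <= p i) ->
  p 0%N < m%:R^-1 ->
  (* i.i.d. stream of items with law p *)
  (forall n i, measurable [set w | X n w = i]) ->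
  (forall n i, P [set w | X n w = i] = (p i)%:E) ->
  (* auxiliary uniform[0,1] randomness for tie-breaking and coins *)
  (forall n, measurable_fun setT (U n)) ->
  (forall n, measurable_fun setT (V n)) ->
  (forall n x, 0 <= x <= 1 -> P [set w | 0 <= U n w <= x] = x%:E) ->
  (forall n x, 0 <= x <= 1 -> P [set w | 0 <= V n w <= x] = x%:E) ->
  mutually_independent P (uss_family X U V) ->
  {ae P, forall w, exists t0 : nat, forall t : nat, (t0 <= t)%N ->
     let s := uss_run m (fun n => X n w) (fun n => U n w) (fun n => V n w) t in
     0 <= (t%:R : R) / m%:R - (uss_min s)%:R <= m%:R * (ln (t%:R : R)) ^+ 2 + m%:R /\
     0 <= ((uss_max s)%:R : R) - t%:R / m%:R <= (ln (t%:R : R)) ^+ 2 + 1}.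
Proof.
move=> m_gt0 p_ge0 p_sum1 p_decr p0_lt mX PX _ _ _ _ indep.
have p_le_p0 i : p i <= p 0%N by elim: i => // i; apply: le_trans (p_decr i).
have p0_le1 : p 0%N <= 1.
  by apply: le_trans (ltW p0_lt) _; rewrite invf_le1 ?ler1n ?ltr0n.
have sum_p_le1 : (\sum_(i <oo) (p i)%:E <= 1)%E by rewrite (eseries_EFin_lim p_sum1).
have [z z_gt1 Qm_le] := chernoff_base_exists m_gt0 (p_ge0 0%N) p0_lt.
have lnz_gt0 : 0 < ln z by apply: ln_gt0.
pose N := maxn 3 (Num.truncn (expR (5 / ln z))).+1.
pose bad t := bad_event X m ((ln (t%:R : R)) ^+ 2) t.
apply: filterS (ae_eventually_notin (F := bad) (N := N) _ _) => [w [t0 good]|t|t le_Nt].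
- exists t0 => t le_t0t /=.
  apply: (uss_run_min_max_bounds (U^~ w) (V^~ w) m_gt0 (sqr_ge0 _)).
  move=> s n' lt_st le_n's; rewrite leNgt; apply/negP => excess.
  by apply: (good t le_t0t); exists s => //; exists n'.
- exact: measurable_bad_event.
apply: le_trans
  (prob_bad_event_le mX PX indep p_ge0 p_le_p0 p0_le1 sum_p_le1 _ _ m_gt0 z_gt1 Qm_le) _.
have t_ge3 : (3 <= t)%N := leq_trans (leq_maxl _ _) le_Nt.
rewrite lee_fin; apply: sqr_expR_lnsqr_le => //.
rewrite -[5 / ln z]expRK ler_ln ?posrE ?expR_gt0 ?ltr0n ?(leq_trans _ t_ge3) //.
apply: le_trans (ltW (truncnS_gt _)) _.
by rewrite ler_nat (leq_trans (leq_maxr _ _) le_Nt).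
Qed.
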